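(* Fix $k\geqslant 2$. Suppose that for every $k$-player projection game $G'$ that is loosely-connected and satisfies $\mathbf{val}(G')<1$ there is a constant $c_{G'}>0$ with $\mathbf{val}(G'^{\otimes n})\leqslant \exp(-c_{G'} n)$ for all $n\geqslant 1$. Then for every $k$-player projection game $G$ with $\mathbf{val}(G)<1$ there is a constant $c_G>0$ with $\mathbf{val}(G^{\otimes n})\leqslant \exp(-c_G n)$ for all $n\geqslant 1$.
   Context: A $k$-player game $G$ consists of finite question sets $\mathcal{X}_1,\dots,\mathcal{X}_k$, finite answer sets $\mathcal{A}_1,\dots,\mathcal{A}_k$, a probability distribution $\mu$ on $\mathcal{X}_1\times\cdots\times\mathcal{X}_k$, and a predicate $V$ on (question tuple, answer tuple). The verifier samples $(x^1,\dots,x^k)\sim\mu$, sends $x^i$ to player $i$, player $i$ answers $\alpha^i(x^i)\in\mathcal{A}_i$ for some function $\alpha^i$ (no communication), and accepts iff $V$ holds; $\mathbf{val}(G)$ is the maximum acceptance probability over strategies. $G^{\otimes n}$ is the game with question sets $\mathcal{X}_i^n$, answer sets $\mathcal{A}_i^n$, in which $n$ question tuples are drawn independently from $\mu$ (player $i$ receiving the $n$ $i$-th coordinates) and the verifier accepts iff $V$ holds in every coordinate. $G$ is a projection game if for every question tuple $q$ there exist $D_q\geqslant1$ and maps $\sigma^i_q:\mathcal{A}_i\to[D_q]$ with $V(q,(a^1,\dots,a^k))=1$ iff $\sigma^i_q(a^i)=\sigma^{i'}_q(a^{i'})$ for all $i\neq i'$. $G$ is loosely-connected if there do not exist partitions $\mathcal{X}_i=\mathcal{X}'_i\sqcup\mathcal{X}''_i$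 ($i\in[k]$) such that $\mathsf{supp}(\mu)\subseteq(\mathcal{X}'_1\times\cdots\times\mathcal{X}'_k)\cup(\mathcal{X}''_1\times\cdots\times\mathcal{X}''_k)$ and $\mathsf{supp}(\mu)$ intersects both of these products. *)

From HB Require Import structures.
From mathcomp Require Import all_boot all_order all_algebra.
From mathcomp Require Import reals.
From mathcomp.analysis Require Import sequences exp.
Set Implicit Arguments. Unset Strict Implicit. Unset Printing Implicit Defensive.
Import Order.TTheory GRing.Theory Num.Theory.
Local Open Scope ring_scope.

(* A k-player game over the reals R: question sets gQ i, answer sets gA i
   (players are indexed by 'I_k), a weight function gmu on question tuples
   (a probability distribution when [game_is_distr] holds) and a predicate gV. *)
Record game (k : nat) (R : realType) : Type := Game {
  gQ : 'I_k -> finType;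
  gA : 'I_k -> finType;
  gmu : {dffun forall i, gQ i} -> R;
  gV : {dffun forall i, gQ i} -> {dffun forall i, gA i} -> bool }.

Arguments gQ {k R} g i.
Arguments gA {k R} g i.
Arguments gmu {k R} g q.
Arguments gV {k R} g q a.

Section Games.
Variables (k : nat) (R : realType).

Definition game_is_distr (G : game k R) : Prop :=
  (forall q, 0 <= gmu G q) /\ \sum_q gmu G q = 1.

Definition game_strategy (G : game k R) := {dffun forall i, {ffun gQ G i -> gA G i}}.

Definition game_answers (G : game k R) (s : game_strategy G) (q : {dffun forall i, gQ G i})
  : {dffun forall i, gA G i} := [ffun i => s i (q i)].

Definition win_prob (G : game k R) (s : game_strategy G) : R :=
  \sum_q gmu G q * (gV G q (game_answers s q))%:R.

Definition game_val (G : game k R) : R := \big[Num.max/0]_(s : game_strategy G) win_prob s.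

Definition game_coord (n : nat) (T : 'I_k -> finType)
  (q : {dffun forall i, {ffun 'I_n -> T i}}) (j : 'I_n) : {dffun forall i, T i} :=
  [ffun i => q i j].

Definition game_tensor (G : game k R) (n : nat) : game k R :=
  @Game k R (fun i => {ffun 'I_n -> gQ G i}) (fun i => {ffun 'I_n -> gA G i})
    (fun q => \prod_(j < n) gmu G (game_coord q j))
    (fun q a => [forall j : 'I_n, gV G (game_coord q j) (game_coord a j)]).

Definition projection_game (G : game k R) : Prop :=
  forall q : {dffun forall i, gQ G i},
    exists (D : nat) (_ : (0 < D)%N) (sigma : forall i, gA G i -> 'I_D),
      forall a : {dffun forall i, gA G i},
        gV G q a <-> (forall i i' : 'I_k, sigma i (a i) = sigma i' (a i')).

Definition game_supp (G : game k R) (q : {dffun forall i, gQ G i}) : Prop := gmu G q != 0.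

(* loosely-connected: no partitions X_i = X'_i |_| X''_i (X'_i = P i,
   X''_i = its complement) with game_supp contained in the union of the two
   products and meeting both. *)
Definition loosely_connected (G : game k R) : Prop :=
  ~ exists P : forall i, {set gQ G i},
      [/\ (forall q, game_supp q -> (forall i, q i \in P i) \/ (forall i, q i \notin P i)),
          (exists q, game_supp q /\ forall i, q i \in P i) &
          (exists q, game_supp q /\ forall i, q i \notin P i)].

End Games.

(* Induct on the size of the support of mu.  If G is not loosely connected, a disconnecting
   partition splits mu = p mu' + (1 - p) mu'' into the two conditional distributions, and
   since the players can answer independently on the two blocks, one of the reweighted
   games, say G' (with mu'), has value < 1.  It has smaller support, so by induction
   val(G'^m) <= exp(-c m).  Expanding mu^n as a mixture over the set B of coordinates
   drawn from mu' and fixing the questions outside B, every strategy for G^n induces one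
   for G'^|B|, so val(G^n) <= sum_B p^|B| e^(-c |B|) (1 - p)^(n - |B|)
   = (p e^(-c) + 1 - p)^n. *)

From HB Require Import structures.
From mathcomp Require Import all_boot all_order all_algebra.
From mathcomp Require Import boolp reals.
From mathcomp.analysis Require Import sequences exp.
Import Order.TTheory GRing.Theory Num.Theory.
Local Open Scope ring_scope.
Set Implicit Arguments. Unset Strict Implicit. Unset Printing Implicit Defensive.

Section Conditioning.
Variables (R : realType) (T : finType) (mu : T -> R).
Hypothesis mu_ge0 : forall x, 0 <= mu x.

Definition mass (A : {set T}) : R := \sum_(x in A) mu x.

Definition cond (A : {set T}) (x : T) : R := (x \in A)%:R * mu x / mass A.

Lemma massC (A : {set T}) : mass A + mass (~: A) = \sum_x mu x.
Proof.
by rewrite [RHS](bigID [in A]); congr (_ + _); apply: eq_bigl => x; rewrite inE.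
Qed.

Lemma mass_gt0 (A : {set T}) x : x \in A -> mu x != 0 -> 0 < mass A.
Proof.
move=> xA mux; apply: (lt_le_trans (y := mu x)); first by rewrite lt0r mux mu_ge0.
by rewrite /mass (bigD1 x) //= lerDl sumr_ge0.
Qed.

Lemma cond_ge0 (A : {set T}) x : 0 <= cond A x.
Proof. by rewrite divr_ge0 ?mulr_ge0 ?sumr_ge0. Qed.

Lemma sum_cond (A : {set T}) : 0 < mass A -> \sum_x cond A x = 1.
Proof.
move=> massA; rewrite -mulr_suml [X in X / _](_ : _ = mass A) ?divff ?gt_eqF //.
rewrite /mass [RHS]big_mkcond; apply: eq_bigr => x _.
by case: (x \in A); rewrite ?mul1r ?mul0r.
Qed.

Lemma cond_out (A : {set T}) x : x \notin A -> cond A x = 0.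
Proof. by move/negbTE=> xA; rewrite /cond xA !mul0r. Qed.

Lemma cond_neq0 (A : {set T}) x : cond A x != 0 -> x \in A /\ mu x != 0.
Proof.
rewrite /cond; case: (x \in A); last by rewrite !mul0r eqxx.
by rewrite mul1r mulf_eq0 negb_or => /andP[].
Qed.

Lemma cond_mix (A : {set T}) x : 0 < mass A -> 0 < mass (~: A) ->
  mu x = mass A * cond A x + mass (~: A) * cond (~: A) x.
Proof.
move=> massA massAC; rewrite /cond ![mass _ * _]mulrC !divfK ?gt_eqF //.
by rewrite inE; case: (x \in A); rewrite /= ?mul1r ?mul0r ?addr0 ?add0r.
Qed.

Lemma supp_cond_proper (A : {set T}) : 0 < mass (~: A) ->
  [set x | cond A x != 0] \proper [set x | mu x != 0].
Proof.
move=> massAC; apply/properP; split.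
  by apply/subsetP => x; rewrite !inE => /cond_neq0[].
have [x xAC mux] : exists2 x, x \in ~: A & mu x != 0.
  apply/exists_inP; apply: contraTT massAC => /exists_inPn mu0.
  by rewrite -leNgt /mass big1 // => x /mu0 /negPn /eqP.
by exists x; rewrite !inE ?mux // negbK cond_out -?in_setC.
Qed.

End Conditioning.

Section GameValue.
Variables (k : nat) (R : realType).
Implicit Types (G : game k R) (n : nat).

Lemma win_prob_le_val G (s : game_strategy G) : win_prob s <= game_val G.
Proof. by rewrite /game_val (bigD1 s) //= le_max lexx. Qed.

Lemma game_val_le G (x : R) :
  0 <= x -> (forall s : game_strategy G, win_prob s <= x) -> game_val G <= x.
Proof.
move=> x0 win_le; rewrite /game_val.
by elim/big_ind: _ => // y z; rewrite ge_max => -> ->.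
Qed.

Lemma perfect_strategy_of_val G :
  1 <= game_val G -> exists s : game_strategy G, 1 <= win_prob s.
Proof.
move=> val_ge1; apply: contrapT => no_perfect.
suff : game_val G < 1 by rewrite ltNge val_ge1.
rewrite /game_val; elim/big_ind: _ => // [y z|s _]; first by rewrite gt_max => -> ->.
by rewrite ltNge; apply/negP => win1; apply: no_perfect; exists s.
Qed.

Lemma win_prob_le_mass G (s : game_strategy G) :
  (forall q, 0 <= gmu G q) -> win_prob s <= \sum_q gmu G q.
Proof. by move=> mu_ge0; apply: ler_sum => q _; rewrite ler_piMr // lern1 leq_b1. Qed.

Lemma game_val_le1 G : game_is_distr G -> game_val G <= 1.
Proof.
by case=> mu_ge0 mu_sum; apply: game_val_le => // s; rewrite -mu_sum win_prob_le_mass.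
Qed.

Lemma eq_win_prob_on_supp G (s t : game_strategy G) :
  (forall q, gmu G q != 0 -> game_answers s q = game_answers t q) -> win_prob s = win_prob t.
Proof.
move=> eq_st; apply: eq_bigr => q _.
by have [->|/eq_st ->] := eqVneq (gmu G q) 0; rewrite ?mul0r.
Qed.

Lemma sum_prod_game_coord (T : 'I_k -> finType) n (g : {dffun forall i, T i} -> R) :
  \sum_(q : {dffun forall i, {ffun 'I_n -> T i}}) \prod_(j < n) g (game_coord q j)
    = (\sum_x g x) ^+ n.
Proof.
pose transpose (r : {ffun 'I_n -> {dffun forall i, T i}}) :
  {dffun forall i, {ffun 'I_n -> T i}} := [ffun i => [ffun j => r j i]].
pose untranspose (q : {dffun forall i, {ffun 'I_n -> T i}}) :
  {ffun 'I_n -> {dffun forall i, T i}} := [ffun j => game_coord q j].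
rewrite (reindex transpose); last first.
  exists untranspose => [r _|q _]; apply/ffunP => ?; apply/ffunP => ?; by rewrite !ffunE.
transitivity (\prod_(j < n) \sum_x g x); last by rewrite prodr_const card_ord.
rewrite bigA_distr_bigA; apply: eq_bigr => r _.
by apply: eq_bigr => j _; congr g; apply/ffunP => i; rewrite !ffunE.
Qed.

Lemma game_tensor_distr G n : game_is_distr G -> game_is_distr (game_tensor G n).
Proof.
case=> mu_ge0 mu_sum; split=> [q|]; first exact: prodr_ge0.
by rewrite sum_prod_game_coord mu_sum expr1n.
Qed.

Definition reweight G (mu : {dffun forall i, gQ G i} -> R) : game k R :=
  @Game k R (gQ G) (gA G) mu (gV G).
Arguments reweight : clear implicits.

Lemma win_prob_mix G (mu1 mu2 : {dffun forall i, gQ G i} -> R) (a b : R)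
    (s : game_strategy G) :
  (forall q, gmu G q = a * mu1 q + b * mu2 q) ->
  win_prob s = a * @win_prob _ _ (reweight G mu1) s + b * @win_prob _ _ (reweight G mu2) s.
Proof.
move=> mu_mix; rewrite /win_prob !big_distrr -big_split; apply: eq_bigr => q _ /=.
by rewrite mu_mix mulrDl !mulrA.
Qed.

End GameValue.

Arguments reweight {k R}.

Section Glue.
Variables (n : nat) (B : {set 'I_n}) (T : finType) (d : T).

(* [d] is never used: every index lies in [B] or in [~: B]. *)
Definition glue (x : {ffun 'I_#|B| -> T}) (z : {ffun 'I_#|~: B| -> T}) : {ffun 'I_n -> T} :=
  [ffun j => if [pick t | enum_val t == j] is Some t then x t
             else if [pick u | enum_val u == j] is Some u then z u else d].

Definition restr_in (r : {ffun 'I_n -> T}) : {ffun 'I_#|B| -> T} := [ffun t => r (enum_val t)].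

Definition restr_out (r : {ffun 'I_n -> T}) : {ffun 'I_#|~: B| -> T} :=
  [ffun u => r (enum_val u)].

Lemma glue_in x z (t : 'I_#|B|) : glue x z (enum_val t) = x t.
Proof.
rewrite ffunE; case: pickP => [t' /eqP/enum_val_inj -> //|no_t].
by have := no_t t; rewrite eqxx.
Qed.

Lemma glue_out x z (u : 'I_#|~: B|) : glue x z (enum_val u) = z u.
Proof.
rewrite ffunE; case: pickP => [t /eqP tu|_].
  by have := enum_valP u; rewrite -tu inE enum_valP.
case: pickP => [u' /eqP/enum_val_inj -> //|no_u].
by have := no_u u; rewrite eqxx.
Qed.

Lemma restr_inK x z : restr_in (glue x z) = x.
Proof. by apply/ffunP => t; rewrite ffunE glue_in. Qed.

Lemma restr_outK x z : restr_out (glue x z) = z.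
Proof. by apply/ffunP => u; rewrite ffunE glue_out. Qed.

Lemma glueK r : glue (restr_in r) (restr_out r) = r.
Proof.
apply/ffunP => j; have [jB|jNB] := boolP (j \in B).
  by rewrite -(enum_rankK_in jB jB) glue_in ffunE.
have jC : j \in ~: B by rewrite inE.
by rewrite -(enum_rankK_in jC jC) glue_out ffunE.
Qed.

End Glue.

Lemma sum_ffun_bool_prod (R : realType) n (F : 'I_n -> bool -> R) :
  \sum_(f : {ffun 'I_n -> bool}) \prod_(j < n) F j (f j) = \prod_(j < n) (F j true + F j false).
Proof. by rewrite -bigA_distr_bigA; apply: eq_bigr => j _; rewrite big_bool. Qed.

Lemma prod_ffun_bool (R : realType) n (f : {ffun 'I_n -> bool}) (x y : R) :
  \prod_(j < n) (if f j then x else y) = x ^+ #|[set j | f j]| * y ^+ #|~: [set j | f j]|.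
Proof.
rewrite -!prodr_const (bigID [in [set j | f j]]) /=.
by congr (_ * _); apply: eq_big => j; rewrite !inE //; [move=> -> | move/negbTE ->].
Qed.

Section TensorOfMixture.
Variables (k : nat) (R : realType) (G : game k R).
Variables (mu1 mu2 : {dffun forall i, gQ G i} -> R) (a b c : R).
Hypotheses (a_ge0 : 0 <= a) (b_ge0 : 0 <= b).
Hypotheses (mu1_ge0 : forall q, 0 <= mu1 q) (mu2_ge0 : forall q, 0 <= mu2 q).
Hypothesis mu2_sum : \sum_q mu2 q = 1.
Hypothesis val_mu1_tensor :
  forall m, game_val (game_tensor (reweight G mu1) m) <= expR (- (c * m%:R)).
Variable d : {dffun forall i, gQ G i}.

Definition mix_weight n (f : {ffun 'I_n -> bool})
    (q : {dffun forall i, {ffun 'I_n -> gQ G i}}) : R :=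
  \prod_(j < n) (if f j then a * mu1 (game_coord q j) else b * mu2 (game_coord q j)).

Section FixedPattern.
Variables (n : nat) (f : {ffun 'I_n -> bool}) (s : game_strategy (game_tensor G n)).
Let B := [set j | f j].
Local Notation Qin := {dffun forall i, {ffun 'I_#|B| -> gQ G i}}.
Local Notation Qout := {dffun forall i, {ffun 'I_#|~: B| -> gQ G i}}.
Local Notation Qn := {dffun forall i, {ffun 'I_n -> gQ G i}}.

Definition glue_questions (x : Qin) (z : Qout) : Qn := [ffun i => glue (d i) (x i) (z i)].

Lemma reindex_glue_questions (F : Qn -> R) :
  \sum_q F q = \sum_x \sum_z F (glue_questions x z).
Proof.
rewrite pair_bigA (reindex (fun p : Qin * Qout => glue_questions p.1 p.2)) //=.
exists (fun q => ([ffun i => restr_in B (q i)], [ffun i => restr_out B (q i)])).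
  by move=> [x z] _ /=; congr pair; apply/ffunP => i; rewrite !ffunE ?restr_inK ?restr_outK.
by move=> q _; apply/ffunP => i; rewrite !ffunE glueK.
Qed.

Lemma glue_questionsE x z i : glue_questions x z i = glue (d i) (x i) (z i).
Proof. exact: ffunE. Qed.

Lemma game_coord_glue_in x z (t : 'I_#|B|) :
  game_coord (glue_questions x z) (enum_val t) = game_coord x t.
Proof. by apply/ffunP => i; rewrite ffunE glue_questionsE glue_in ffunE. Qed.

Lemma game_coord_glue_out x z (u : 'I_#|~: B|) :
  game_coord (glue_questions x z) (enum_val u) = game_coord z u.
Proof. by apply/ffunP => i; rewrite ffunE glue_questionsE glue_out ffunE. Qed.

Lemma mix_weight_glue x z :
  mix_weight f (glue_questions x z) =
  \prod_(t < #|B|) (a * mu1 (game_coord x t)) * \prod_(u < #|~: B|) (b * mu2 (game_coord z u)).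
Proof.
rewrite /mix_weight (bigID [in B]) /=; congr (_ * _).
  rewrite big_enum_val; apply: eq_bigr => t _.
  by have := enum_valP t; rewrite inE => ->; rewrite game_coord_glue_in.
rewrite (eq_bigl [in ~: B]) => [|j]; last by rewrite !inE.
rewrite big_enum_val; apply: eq_bigr => u _.
have := enum_valP u; rewrite !inE => /negbTE ->.
by rewrite game_coord_glue_out.
Qed.

Definition strategy_in (z : Qout) : game_strategy (game_tensor (reweight G mu1) #|B|) :=
  [ffun i => [ffun y : {ffun 'I_#|B| -> gQ G i} =>
    [ffun t => s i (glue (d i) y (z i)) (enum_val t)]]].

Definition wins_in (q : Qn) : bool :=
  [forall t : 'I_#|B|,
    gV G (game_coord q (enum_val t)) (game_coord (game_answers s q) (enum_val t))].

Lemma wins_in_glue x z :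
  wins_in (glue_questions x z) =
  gV (game_tensor (reweight G mu1) #|B|) x (game_answers (strategy_in z) x).
Proof.
apply: eq_forallb => t; rewrite game_coord_glue_in; congr (gV G _ _).
by apply/ffunP => i; rewrite !ffunE.
Qed.

Lemma mix_win_le :
  \sum_q mix_weight f q * (gV (game_tensor G n) q (game_answers s q))%:R
    <= (a * expR (- c)) ^+ #|B| * b ^+ #|~: B|.
Proof.
have weight_ge0 q : 0 <= mix_weight f q.
  by apply: prodr_ge0 => j _; case: (f j); rewrite mulr_ge0.
apply: (le_trans (y := \sum_q mix_weight f q * (wins_in q)%:R)).
  apply: ler_sum => q _; apply: ler_wpM2l => //; rewrite ler_nat.
  have [/forallP wins|//] := boolP (gV (game_tensor G n) q (game_answers s q)).
  by rewrite (_ : wins_in q) //; apply/forallP => t; apply: wins.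
rewrite reindex_glue_questions exchange_big /=.
under eq_bigr => z _ do under eq_bigr => x _ do rewrite mix_weight_glue wins_in_glue mulrAC.
apply: (le_trans (y := \sum_z a ^+ #|B| * expR (- (c * #|B|%:R))
                       * \prod_(u < #|~: B|) (b * mu2 (game_coord z u)))).
  apply: ler_sum => z _; rewrite -big_distrl; apply: ler_wpM2r.
    by apply: prodr_ge0 => u _; rewrite mulr_ge0.
  rewrite (_ : \sum_x _ = a ^+ #|B| * win_prob (strategy_in z)).
    by apply: ler_wpM2l; [exact: exprn_ge0 | exact: le_trans (win_prob_le_val _) _].
  rewrite /win_prob big_distrr; apply: eq_bigr => x _.
  by rewrite big_split prodr_const card_ord -mulrA.
rewrite -big_distrr (@sum_prod_game_coord _ _ (gQ G) _ (fun y => b * mu2 y)).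
by rewrite -mulr_sumr mu2_sum mulr1 -mulNr expRM_natr exprMn.
Qed.

End FixedPattern.

Hypothesis mu_mix : forall q, gmu G q = a * mu1 q + b * mu2 q.

Lemma game_val_tensor_mix_le n : game_val (game_tensor G n) <= (a * expR (- c) + b) ^+ n.
Proof.
apply: game_val_le => [|s]; first by rewrite exprn_ge0 // addr_ge0 // mulr_ge0 // expR_ge0.
rewrite /win_prob; under eq_bigr => q _.
  rewrite /= (eq_bigr (fun j => a * mu1 (game_coord q j) + b * mu2 (game_coord q j))) //.
  rewrite -(sum_ffun_bool_prod (fun j (bb : bool) =>
             if bb then a * mu1 (game_coord q j) else b * mu2 (game_coord q j))).
  rewrite mulr_suml; over.
rewrite exchange_big /=.
apply: (le_trans (y := \sum_(f : {ffun 'I_n -> bool})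
          (a * expR (- c)) ^+ #|[set j | f j]| * b ^+ #|~: [set j | f j]|)).
  by apply: ler_sum => f _; apply: mix_win_le.
under eq_bigr => f _ do rewrite -prod_ffun_bool.
by rewrite (sum_ffun_bool_prod (fun _ bb => if bb then _ else _)) prodr_const card_ord.
Qed.

End TensorOfMixture.

Section Decomposition.
Variables (k : nat) (R : realType).
Implicit Types (G : game k R).

Definition tensor_val_exp_decay G : Prop :=
  exists c : R, 0 < c /\
    forall n, (1 <= n)%N -> game_val (game_tensor G n) <= expR (- (c * n%:R)).

Lemma tensor_val_exp_decay_mix G (mu1 mu2 : {dffun forall i, gQ G i} -> R) (a b : R) :
  0 < a -> 0 <= b -> a + b = 1 ->
  game_is_distr (reweight G mu1) -> game_is_distr (reweight G mu2) ->
  (forall q, gmu G q = a * mu1 q + b * mu2 q) ->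
  tensor_val_exp_decay (reweight G mu1) -> tensor_val_exp_decay G.
Proof.
move=> a_gt0 b_ge0 ab distr1 [mu2_ge0 mu2_sum] mu_mix [c [c_gt0 decay1]].
have [d _|no_q] := pickP (fun _ : {dffun forall i, gQ G i} => true); last first.
  by move: mu2_sum; rewrite big_pred0 // => /eqP; rewrite eq_sym oner_eq0.
have val1 m : game_val (game_tensor (reweight G mu1) m) <= expR (- (c * m%:R)).
  case: m => [|m]; last exact: decay1.
  by rewrite mulr0 oppr0 expR0 game_val_le1 //; exact: game_tensor_distr.
pose beta := a * expR (- c) + b.
have beta_gt0 : 0 < beta by rewrite ltr_wpDr // mulr_gt0 // expR_gt0.
have beta_lt1 : beta < 1 by rewrite -ab ltrD2r gtr_pMr // expR_lt1 oppr_lt0.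
exists (- ln beta); split; first by rewrite oppr_gt0 ln_lt0 // beta_gt0 beta_lt1.
move=> n _; rewrite mulNr opprK expRM_natr lnK ?posrE //.
have [mu1_ge0 _] := distr1.
exact: (@game_val_tensor_mix_le _ _ G mu1 mu2 a b c (ltW a_gt0) b_ge0 mu1_ge0 mu2_ge0
          mu2_sum val1 d mu_mix).
Qed.

Lemma game_distr_cond G (A : {set {dffun forall i, gQ G i}}) :
  game_is_distr G -> 0 < mass (gmu G) A -> game_is_distr (reweight G (cond (gmu G) A)).
Proof. by case=> mu_ge0 _ massA; split; [exact: cond_ge0 | exact: sum_cond]. Qed.

Lemma perfect_of_perfect_components G (P : forall i, {set gQ G i}) :
  let A := [set q : {dffun forall i, gQ G i} | [forall i, q i \in P i]] in
  game_is_distr G ->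
  (forall q, gmu G q != 0 -> q \notin A -> forall i, q i \notin P i) ->
  0 < mass (gmu G) A -> 0 < mass (gmu G) (~: A) ->
  1 <= game_val (reweight G (cond (gmu G) A)) ->
  1 <= game_val (reweight G (cond (gmu G) (~: A))) ->
  1 <= game_val G.
Proof.
move=> A [_ mu_sum] supp_out massA massAC.
move=> /perfect_strategy_of_val[s1 win1] /perfect_strategy_of_val[s2 win2].
pose s : game_strategy G := [ffun i => [ffun x => if x \in P i then s1 i x else s2 i x]].
apply: le_trans (win_prob_le_val s).
rewrite (win_prob_mix s (fun q => cond_mix q massA massAC)).
have -> : @win_prob _ _ (reweight G (cond (gmu G) A)) s = win_prob s1.
  apply: eq_win_prob_on_supp => q /cond_neq0[+ _]; rewrite inE => /forallP qP.
  by apply/ffunP => i; rewrite !ffunE qP.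
have -> : @win_prob _ _ (reweight G (cond (gmu G) (~: A))) s = win_prob s2.
  apply: eq_win_prob_on_supp => q /cond_neq0[+ q_supp].
  rewrite inE => /(supp_out _ q_supp) qP.
  by apply/ffunP => i; rewrite !ffunE (negbTE (qP i)).
by rewrite -mu_sum -(@massC _ _ (gmu G) A) lerD // ler_pMr.
Qed.

Lemma not_loosely_connected_split G : (0 < k)%N -> game_is_distr G -> game_val G < 1 ->
  ~ loosely_connected G ->
  exists A : {set {dffun forall i, gQ G i}},
    [/\ 0 < mass (gmu G) A, 0 < mass (gmu G) (~: A)
      & game_val (reweight G (cond (gmu G) A)) < 1].
Proof.
move=> k_gt0 distrG valG /contrapT[P [supp_split [q1 [q1_supp q1P]] [q2 [q2_supp q2P]]]].
pose A := [set q : {dffun forall i, gQ G i} | [forall i, q i \in P i]].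
have [mu_ge0 _] := distrG.
have massA : 0 < mass (gmu G) A.
  by apply: (mass_gt0 mu_ge0 (x := q1)) => //; rewrite inE; apply/forallP.
have massAC : 0 < mass (gmu G) (~: A).
  apply: (mass_gt0 mu_ge0 (x := q2)) => //.
  by rewrite !inE negb_forall; apply/existsP; exists (Ordinal k_gt0); rewrite q2P.
have [val1|val1] := ltP (game_val (reweight G (cond (gmu G) A))) 1; first by exists A.
have [val2|val2] := ltP (game_val (reweight G (cond (gmu G) (~: A)))) 1.
  by exists (~: A); rewrite setCK.
suff : 1 <= game_val G by rewrite leNgt valG.
apply: (perfect_of_perfect_components (P := P)) => // q q_supp.
rewrite inE => qNA; case: (supp_split q q_supp) => // qP.
by move: qNA; rewrite (_ : [forall i, q i \in P i]) //; apply/forallP.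
Qed.

End Decomposition.

Theorem lemma2p4 (k : nat) (hk : (2 <= k)%N) (R : realType) :
  (forall G' : game k R, game_is_distr G' -> projection_game G' ->
     loosely_connected G' -> game_val G' < 1 ->
     exists c : R, 0 < c /\
       forall n : nat, (1 <= n)%N -> game_val (game_tensor G' n) <= expR (- (c * n%:R)))
  ->
  forall G : game k R, game_is_distr G -> projection_game G -> game_val G < 1 ->
    exists c : R, 0 < c /\
      forall n : nat, (1 <= n)%N -> game_val (game_tensor G n) <= expR (- (c * n%:R)).
Proof.
move=> decay_lc.
have k_gt0 : (0 < k)%N by apply: leq_trans hk.
suff decay : forall N (G : game k R), (#|[set q | gmu G q != 0%R]| < N)%N ->
    game_is_distr G -> projection_game G -> game_val G < 1 -> tensor_val_exp_decay G.
  by move=> G; apply: decay (ltnSn _).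
elim=> // N IH G supp_lt distrG projG valG.
have [lcG|/(not_loosely_connected_split k_gt0 distrG valG)] := pselect (loosely_connected G).
  exact: decay_lc.
move=> [A [massA massAC val1]].
apply: (tensor_val_exp_decay_mix massA (ltW massAC) _ (game_distr_cond distrG massA)
          (game_distr_cond distrG massAC) (fun q => cond_mix q massA massAC)).
  by rewrite massC; case: distrG.
apply: IH; [|exact: game_distr_cond|exact: projG|exact: val1].
exact: leq_trans (proper_card (supp_cond_proper massAC)) supp_lt.
Qed.
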